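(* The calculus $\lambda^a_{\parallel}$ terminates: if $\Gamma\vdash^a D:\alpha$ in $\lambda^a_{\parallel}$, then there is no infinite reduction sequence $D\to D_1\to D_2\to\cdots$.
   Context: Terms up to $\alpha$-renaming; substitution capture-avoiding. $\lambda^a_{\parallel}$: usages $u\in\{\infty,1,0\}$ with $\downarrow\infty=\infty$, $\downarrow1=0$, $\downarrow0$ undefined. Values $V::=*\mid\lambda y_1\ldots y_n.D$ ($n\ge1$); declarations $D::=\mathsf{let}_{u_1}x_1=V_1\,\mathsf{in}\cdots\mathsf{let}_{u_m}x_m=V_m\,\mathsf{in}\,M$ ($m\ge0$); terms $M::=x\mid@(M,M_1,\ldots,M_n)\mid(M\mid M)$ ($n\ge1$). Convention: applying $@$ or $\mid$ to declarations abbreviates the declaration obtained by moving all their let-prefixes (renamed apart) to the front. Evaluation contexts $E::=\mathsf{let}_u x=V\,\mathsf{in}\,[\,]\mid E[@(x_1,\ldots,x_k,[\,],M_1,\ldots,M_l)]\mid E[[\,]\mid M]\mid E[M\mid[\,]]$; for $E=\mathsf{let}(\ldots)^*\,\mathsf{in}\,E'$ with $E'$ not starting with a let, $E[\mathsf{let}(\ldots)^*\,\mathsf{in}\,M]$ moves the let-prefix of the plugged declaration in front (no capture). Structural congruence $\equiv$: least equivalence closed under $\alpha$-renaming and the operators with $\mathsf{let}_{u_1}x_1=V_1\,\mathsf{in}\,\mathsf{let}_{u_2}x_2=V_2\,\mathsf{in}\,D\equiv\mathsf{let}_{u_2}x_2=V_2\,\mathsf{in}\,\mathsf{let}_{u_1}x_1=V_1\,\mathsf{in}\,D$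 if $x_1\notin FV(V_2),x_2\notin FV(V_1)$, and $\mathsf{let}_u x=V\,\mathsf{in}\,D\equiv D$ if $x\notin FV(D)$. Reduction: least relation containing $E[\mathsf{let}_u x=\lambda y_1\ldots y_n.D\,\mathsf{in}\,E'[@(x,z_1,\ldots,z_n)]]\to E[\mathsf{let}_{\downarrow u}x=\lambda y_1\ldots y_n.D\,\mathsf{in}\,E'[[z_1/y_1,\ldots,z_n/y_n]D]]$ (only when $u\ne0$; $z_i$ variables), closed under $\equiv$. Value types $A::=\langle1\rangle\mid\langle A_1\to\cdots\to A_n\to\alpha\rangle$; types $\alpha::=A\mid b$ ($b$ the behavior type). Typing ($\Gamma$ maps variables to value types): $\Gamma\vdash^a x:A$ if $x:A\in\Gamma$; $\Gamma\vdash^a\mathsf{let}_\infty x=*\,\mathsf{in}\,D:\alpha$ if $\Gamma,x:\langle1\rangle\vdash^a D:\alpha$; $\Gamma\vdash^a\mathsf{let}_u x=\lambda y_1\ldots y_n.D'\,\mathsf{in}\,D:\alpha$ if $u\ne0$, $\Gamma,y_1:A_1,\ldots,y_n:A_n\vdash^a D':\alpha'$ and $\Gamma,x:\langle A_1\to\cdots\to A_n\to\alpha'\rangle\vdash^a D:\alpha$; $\Gamma\vdash^a\mathsf{let}_0x=V\,\mathsf{in}\,D:\alpha$ if $V\ne*$ and $\Gamma,x:\langle A^+\to\alpha'\rangle\vdash^a D:\alpha$ for some $A^+,\alpha'$; $\Gamma\vdash^a@(M,N_1,\ldots,N_n):\alpha$ if $\Gamma\vdash^a M:\langle A_1\to\cdots\to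 A_n\to\alpha\rangle$ and $\Gamma\vdash^a N_i:A_i$; $\Gamma\vdash^a(M_1\mid M_2):b$ if $\Gamma\vdash^a M_i:b$. *)

From Stdlib Require Import List Arith Relations.
Import ListNotations.

Inductive usage := UInf | U1 | U0.

(* down inf = inf, down 1 = 0; down 0 is undefined in the paper and is
   never used (the reduction rule requires u <> 0); we set it to 0. *)
Definition down (u : usage) : usage :=
  match u with UInf => UInf | U1 => U0 | U0 => U0 end.

(* Terms  M ::= x | @(M, M1, ..., Mn) (n >= 1) | (M | M).
   App f a args  represents  @(f, a, args...). *)
Inductive term :=
| Var (x : nat)
| App (f a : term) (args : list term)
| Par (m1 m2 : term).

(* Values V ::= * | \y1...yn. D  (n >= 1);  Lam y ys D  is  \y ys. D.
   Declarations D ::= let_u x = V in D | M. *)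
Inductive value :=
| Star
| Lam (y : nat) (ys : list nat) (body : decl)
with decl :=
| DBody (m : term)
| DLet (x : nat) (u : usage) (v : value) (d : decl).

Definition binding := (nat * usage * value)%type.

Fixpoint mk (bs : list binding) (m : term) : decl :=
  match bs with
  | [] => DBody m
  | (x, u, v) :: bs' => DLet x u v (mk bs' m)
  end.

Fixpoint prefix (d : decl) : list binding :=
  match d with DBody _ => [] | DLet x u v d' => (x, u, v) :: prefix d' end.

Fixpoint body (d : decl) : term :=
  match d with DBody m => m | DLet _ _ _ d' => body d' end.

Definition binders (bs : list binding) : list nat := map (fun b => fst (fst b)) bs.

Definition disjoint (l1 l2 : list nat) : Prop := forall v, In v l1 -> ~ In v l2.

Definition remove_all (l rm : list nat) : list nat :=
  filter (fun v => negb (existsb (Nat.eqb v) rm)) l.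

Fixpoint fv_term (m : term) : list nat :=
  match m with
  | Var x => [x]
  | App f a args => fv_term f ++ fv_term a ++ flat_map fv_term args
  | Par m1 m2 => fv_term m1 ++ fv_term m2
  end.

Fixpoint fv_value (v : value) : list nat :=
  match v with
  | Star => []
  | Lam y ys d => remove_all (fv_decl d) (y :: ys)
  end
with fv_decl (d : decl) : list nat :=
  match d with
  | DBody m => fv_term m
  | DLet x _ v d' => fv_value v ++ remove_all (fv_decl d') [x]
  end.

Fixpoint bv_value (v : value) : list nat :=
  match v with
  | Star => []
  | Lam y ys d => y :: ys ++ bv_decl d
  end
with bv_decl (d : decl) : list nat :=
  match d with
  | DBody _ => []
  | DLet x _ v d' => x :: bv_value v ++ bv_decl d'
  end.

Definition sw (a b v : nat) : nat :=
  if v =? a then b else if v =? b then a else v.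

Fixpoint swap_term (a b : nat) (m : term) : term :=
  match m with
  | Var x => Var (sw a b x)
  | App f c args => App (swap_term a b f) (swap_term a b c) (map (swap_term a b) args)
  | Par m1 m2 => Par (swap_term a b m1) (swap_term a b m2)
  end.

Fixpoint swap_value (a b : nat) (v : value) : value :=
  match v with
  | Star => Star
  | Lam y ys d => Lam (sw a b y) (map (sw a b) ys) (swap_decl a b d)
  end
with swap_decl (a b : nat) (d : decl) : decl :=
  match d with
  | DBody m => DBody (swap_term a b m)
  | DLet x u v d' => DLet (sw a b x) u (swap_value a b v) (swap_decl a b d')
  end.

(** * Substitution of variables for variables
    (naive, respecting shadowing; capture is excluded by side conditions
     in the reduction rule, which is closed under alpha-renaming). *)
Fixpoint lookup (s : list (nat * nat)) (v : nat) : nat :=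
  match s with
  | [] => v
  | (k, w) :: s' => if v =? k then w else lookup s' v
  end.

Definition drop (s : list (nat * nat)) (rm : list nat) : list (nat * nat) :=
  filter (fun p => negb (existsb (Nat.eqb (fst p)) rm)) s.

Fixpoint subst_term (s : list (nat * nat)) (m : term) : term :=
  match m with
  | Var x => Var (lookup s x)
  | App f a args => App (subst_term s f) (subst_term s a) (map (subst_term s) args)
  | Par m1 m2 => Par (subst_term s m1) (subst_term s m2)
  end.

Fixpoint subst_value (s : list (nat * nat)) (v : value) : value :=
  match v with
  | Star => Star
  | Lam y ys d => Lam y ys (subst_decl (drop s (y :: ys)) d)
  end
with subst_decl (s : list (nat * nat)) (d : decl) : decl :=
  match d with
  | DBody m => DBody (subst_term s m)
  | DLet x u v d' => DLet x u (subst_value s v) (subst_decl (drop s [x]) d')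
  end.

(* [z1/y1, ..., zn/yn]; if some y's coincide, the last one wins *)
Definition substitution (ys zs : list nat) : list (nat * nat) := rev (combine ys zs).

(** * Evaluation contexts (term part).  An evaluation context of the paper
    is a let-prefix followed by nested frames
    @(x1,...,xk,[],M1,...,Ml), [] | M, M | []. *)
Inductive ectx :=
| EHole
| EAppF (c : ectx) (a : term) (args : list term)
| EAppA (f : nat) (xs : list nat) (c : ectx) (args : list term)
| EParL (c : ectx) (m : term)
| EParR (m : term) (c : ectx).

Fixpoint plug (c : ectx) (m : term) : term :=
  match c with
  | EHole => m
  | EAppF c' a args => App (plug c' m) a args
  | EAppA f xs c' args =>
      match xs with
      | [] => App (Var f) (plug c' m) args
      | x :: xs' => App (Var f) (Var x) (map Var xs' ++ plug c' m :: args)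
      end
  | EParL c' m2 => Par (plug c' m) m2
  | EParR m1 c' => Par m1 (plug c' m)
  end.

Fixpoint fv_ectx (c : ectx) : list nat :=
  match c with
  | EHole => []
  | EAppF c' a args => fv_ectx c' ++ fv_term a ++ flat_map fv_term args
  | EAppA f xs c' args => f :: xs ++ fv_ectx c' ++ flat_map fv_term args
  | EParL c' m => fv_ectx c' ++ fv_term m
  | EParR m c' => fv_term m ++ fv_ectx c'
  end.

Inductive sc_vstep : value -> value -> Prop :=
| SC_alpha_lam : forall a b y ys d,
    ~ In a (fv_value (Lam y ys d)) -> ~ In b (fv_value (Lam y ys d)) ->
    sc_vstep (Lam y ys d) (swap_value a b (Lam y ys d))
| SC_lam_cong : forall y ys d d', sc_step d d' -> sc_vstep (Lam y ys d) (Lam y ys d')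
with sc_step : decl -> decl -> Prop :=
| SC_alpha_let : forall x x' u v d,
    (x' = x \/ ~ In x' (fv_decl d)) ->
    sc_step (DLet x u v d) (DLet x' u v (swap_decl x x' d))
| SC_comm : forall x1 u1 v1 x2 u2 v2 d,
    x1 <> x2 -> ~ In x1 (fv_value v2) -> ~ In x2 (fv_value v1) ->
    sc_step (DLet x1 u1 v1 (DLet x2 u2 v2 d)) (DLet x2 u2 v2 (DLet x1 u1 v1 d))
| SC_gc : forall x u v d, ~ In x (fv_decl d) -> sc_step (DLet x u v d) d
| SC_let_body : forall x u v d d', sc_step d d' -> sc_step (DLet x u v d) (DLet x u v d')
| SC_let_val : forall x u v v' d, sc_vstep v v' -> sc_step (DLet x u v d) (DLet x u v' d).

Definition sc : relation decl := clos_refl_sym_trans decl sc_step.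

(* The redex  E[let_u x = \y ys. B in E'[@(x, z, zs)]]  in flattened form:
   lets1 (from E), the binding of x, lets2 (from E'), and a term context c
   (the composition of the term parts of E and E').  Side conditions are the
   Barendregt-style no-capture conditions; since reduction is closed under
   structural congruence (which contains alpha-renaming) they are no loss. *)
Inductive red0 : decl -> decl -> Prop :=
| R_beta : forall (lets1 lets2 : list binding) x u y ys B c z zs,
    u <> U0 ->
    length zs = length ys ->
    ~ In x (binders lets2) ->
    disjoint (fv_value (Lam y ys B)) (x :: binders lets2) ->
    disjoint (bv_decl B) (z :: zs) ->
    disjoint (binders (prefix (subst_decl (substitution (y :: ys) (z :: zs)) B)))
             (fv_ectx c) ->
    red0 (mk (lets1 ++ (x, u, Lam y ys B) :: lets2)
             (plug c (App (Var x) (Var z) (map Var zs))))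
         (mk (lets1 ++ (x, down u, Lam y ys B) :: lets2
                ++ prefix (subst_decl (substitution (y :: ys) (z :: zs)) B))
             (plug c (body (subst_decl (substitution (y :: ys) (z :: zs)) B)))).

Definition red (d d' : decl) : Prop :=
  exists d1 d1', sc d d1 /\ red0 d1 d1' /\ sc d1' d'.

(* value types A ::= <1> | <A1 -> ... -> An -> alpha> (n >= 1);
   types alpha ::= A | b *)
Inductive vty :=
| VUnit
| VArr (A : vty) (As : list vty) (res : ty)
with ty :=
| TV (A : vty)
| TB.

Definition ctx := list (nat * vty).

Fixpoint lookupT (G : ctx) (x : nat) : option vty :=
  match G with
  | [] => None
  | (k, A) :: G' => if x =? k then Some A else lookupT G' x
  end.

(* G, y1:A1, ..., yn:An  (later bindings override earlier ones) *)
Definition extend_many (G : ctx) (ys : list nat) (As : list vty) : ctx :=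
  fold_left (fun g p => p :: g) (combine ys As) G.

Inductive has_type_term : ctx -> term -> ty -> Prop :=
| T_Var : forall G x A, lookupT G x = Some A -> has_type_term G (Var x) (TV A)
| T_App : forall G M N Ns A As al,
    has_type_term G M (TV (VArr A As al)) ->
    has_type_term G N (TV A) ->
    Forall2 (fun Ni Ai => has_type_term G Ni (TV Ai)) Ns As ->
    has_type_term G (App M N Ns) al
| T_Par : forall G M1 M2,
    has_type_term G M1 TB -> has_type_term G M2 TB -> has_type_term G (Par M1 M2) TB.

Inductive has_type : ctx -> decl -> ty -> Prop :=
| T_Body : forall G M al, has_type_term G M al -> has_type G (DBody M) al
| T_LetStar : forall G x D al,
    has_type ((x, VUnit) :: G) D al -> has_type G (DLet x UInf Star D) al
| T_LetLam : forall G x u y ys D' D A As al' al,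
    u <> U0 ->
    length ys = length As ->
    has_type (extend_many G (y :: ys) (A :: As)) D' al' ->
    has_type ((x, VArr A As al') :: G) D al ->
    has_type G (DLet x u (Lam y ys D') D) al
| T_LetZero : forall G x V D A As al' al,
    V <> Star ->
    has_type ((x, VArr A As al') :: G) D al ->
    has_type G (DLet x U0 V D) al.

(* A cost-annotated set-theoretic model.  A function type
   <A1 -> ... -> An -> alpha> denotes functions returning, along with the
   result, the number of beta-steps the call performs.  Every well-typed
   declaration denotes a result and a cost in any environment modelling its
   context (choice picks the denotations of lambda bodies).  The denotation is
   invariant under structural congruence, and a beta-step strictly lowers the
   cost, because the call @(x, z1, ..., zn) is charged one more than the
   instantiated body replacing it.  An infinite reduction sequence would thus
   yield an infinite descending sequence of naturals. *)

From Stdlib Require Import List Arith Lia Eqdep ClassicalEpsilon.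
Import ListNotations.

Fixpoint tuple_type (l : list Type) : Type :=
  match l with [] => unit | T :: l' => (T * tuple_type l')%type end.

Fixpoint sem_vty (A : vty) : Type :=
  match A with
  | VUnit => unit
  | VArr A As res => sem_vty A -> tuple_type (map sem_vty As) -> (nat * sem_ty res)%type
  end
with sem_ty (t : ty) : Type :=
  match t with TV A => sem_vty A | TB => unit end.

Definition svalue := {A : vty & sem_vty A}.
Definition sresult := {t : ty & sem_ty t}.

Definition env := list (nat * option svalue).

Fixpoint env_lookup (r : env) (w : nat) : option svalue :=
  match r with [] => None | (k, o) :: r' => if w =? k then o else env_lookup r' w end.

Fixpoint env_extend (r : env) (ys : list nat) (As : list vty) {struct As}
  : tuple_type (map sem_vty As) -> env :=
  match As return tuple_type (map sem_vty As) -> env with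
  | [] => fun _ => r
  | A :: As' => fun t =>
      match ys with
      | [] => r
      | y :: ys' => env_extend ((y, Some (existT sem_vty A (fst t))) :: r) ys' As' (snd t)
      end
  end.

Inductive eval_term : env -> term -> nat -> sresult -> Prop :=
| eval_var r x s : env_lookup r x = Some s ->
    eval_term r (Var x) 0 (existT sem_ty (TV (projT1 s)) (projT2 s))
| eval_app r M N Ns cM cN cs A As rt f a args :
    eval_term r M cM (existT sem_ty (TV (VArr A As rt)) f) ->
    eval_term r N cN (existT sem_ty (TV A) a) ->
    eval_args r Ns cs As args ->
    eval_term r (App M N Ns) (cM + cN + cs + S (fst (f a args)))
      (existT sem_ty rt (snd (f a args)))
| eval_par r M1 M2 c1 c2 :
    eval_term r M1 c1 (existT sem_ty TB tt) -> eval_term r M2 c2 (existT sem_ty TB tt) ->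
    eval_term r (Par M1 M2) (c1 + c2) (existT sem_ty TB tt)
with eval_args : env -> list term -> nat -> forall As : list vty,
                 tuple_type (map sem_vty As) -> Prop :=
| eval_args_nil r : eval_args r [] 0 [] tt
| eval_args_cons r N Ns c cs A As a args :
    eval_term r N c (existT sem_ty (TV A) a) -> eval_args r Ns cs As args ->
    eval_args r (N :: Ns) (c + cs) (A :: As) (a, args).

(* An unused binding may be left without denotation ([eval_let_none]), which
   makes garbage collection sound; a binding of usage 0 is never called and may
   denote anything. *)
Inductive eval_decl : env -> decl -> nat -> sresult -> Prop :=
| eval_body r M n p : eval_term r M n p -> eval_decl r (DBody M) n p
| eval_let_none r x u v d n p :
    eval_decl ((x, None) :: r) d n p -> eval_decl r (DLet x u v d) n p
| eval_let_zero r x v d n p s :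
    eval_decl ((x, Some s) :: r) d n p -> eval_decl r (DLet x U0 v d) n p
| eval_let_star r x u d n p :
    eval_decl ((x, Some (existT sem_vty VUnit tt)) :: r) d n p ->
    eval_decl r (DLet x u Star d) n p
| eval_let_lam r x u y ys B d n p A As rt (f : sem_vty (VArr A As rt)) :
    length ys = length As ->
    (forall a args, eval_decl (env_extend r (y :: ys) (A :: As) (a, args)) B
                      (fst (f a args)) (existT sem_ty rt (snd (f a args)))) ->
    eval_decl ((x, Some (existT sem_vty (VArr A As rt) f)) :: r) d n p ->
    eval_decl r (DLet x u (Lam y ys B) d) n p.

Scheme eval_term_mind := Minimality for eval_term Sort Prop
  with eval_args_mind := Minimality for eval_args Sort Prop.
Combined Scheme eval_term_args_mind from eval_term_mind, eval_args_mind.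

Scheme value_mind := Induction for value Sort Prop
  with decl_mind := Induction for decl Sort Prop.
Combined Scheme value_decl_mind from value_mind, decl_mind.

Section TermInd.
Variable P : term -> Prop.
Hypothesis P_var : forall x, P (Var x).
Hypothesis P_app : forall f a args, P f -> P a -> Forall P args -> P (App f a args).
Hypothesis P_par : forall m1 m2, P m1 -> P m2 -> P (Par m1 m2).
Fixpoint term_ind_nested (m : term) : P m :=
  match m with
  | Var x => P_var x
  | App f a args => P_app f a args (term_ind_nested f) (term_ind_nested a)
      ((fix F (l : list term) : Forall P l :=
          match l with
          | [] => Forall_nil _
          | t :: l' => Forall_cons _ (term_ind_nested t) (F l')
          end) args)
  | Par m1 m2 => P_par m1 m2 (term_ind_nested m1) (term_ind_nested m2)
  end.
End TermInd.

Lemma sw_l a b : sw a b a = b.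
Proof. unfold sw; rewrite Nat.eqb_refl; reflexivity. Qed.

Lemma sw_r a b : sw a b b = a.
Proof. unfold sw; destruct (Nat.eqb_spec b a); subst; rewrite ?Nat.eqb_refl; reflexivity. Qed.

Lemma sw_id a b w : w <> a -> w <> b -> sw a b w = w.
Proof. unfold sw; intros; destruct (Nat.eqb_spec w a), (Nat.eqb_spec w b); congruence. Qed.

Lemma sw_invol a b v : sw a b (sw a b v) = v.
Proof.
  unfold sw; destruct (Nat.eqb_spec v a), (Nat.eqb_spec v b);
    repeat match goal with |- context [?x =? ?y] => destruct (Nat.eqb_spec x y) end; lia.
Qed.

Lemma sw_inj a b v w : sw a b v = sw a b w -> v = w.
Proof. intro H; rewrite <- (sw_invol a b v), <- (sw_invol a b w), H; reflexivity. Qed.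

Lemma map_sw_invol a b l : map (sw a b) (map (sw a b) l) = l.
Proof. rewrite map_map; induction l; simpl; rewrite ?sw_invol; congruence. Qed.

Lemma swap_term_invol a b m : swap_term a b (swap_term a b m) = m.
Proof.
  induction m using term_ind_nested; simpl; rewrite ?sw_invol; try congruence.
  rewrite IHm1, IHm2, map_map; f_equal; induction H; simpl; congruence.
Qed.

Lemma swap_value_decl_invol a b :
  (forall v, swap_value a b (swap_value a b v) = v) /\
  (forall d, swap_decl a b (swap_decl a b d) = d).
Proof.
  apply value_decl_mind; simpl; intros;
    rewrite ?sw_invol, ?map_sw_invol, ?swap_term_invol; congruence.
Qed.

Lemma in_remove_all w l rm : In w (remove_all l rm) <-> In w l /\ ~ In w rm.
Proof.
  unfold remove_all; rewrite filter_In, Bool.negb_true_iff, <- Bool.not_true_iff_false,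
    existsb_exists.
  split; intros [H1 H2]; split; auto; intro H; apply H2.
  - exists w; split; auto; apply Nat.eqb_refl.
  - destruct H as [z [Hz E]]; apply Nat.eqb_eq in E; subst; assumption.
Qed.

Lemma existsb_eqb_in w l : existsb (Nat.eqb w) l = true <-> In w l.
Proof.
  rewrite existsb_exists; split.
  - intros [z [Hz E]]; apply Nat.eqb_eq in E; subst; assumption.
  - intro H; exists w; split; auto; apply Nat.eqb_refl.
Qed.

Lemma lookup_drop s rm w :
  lookup (drop s rm) w = if existsb (Nat.eqb w) rm then w else lookup s w.
Proof.
  induction s as [|[k v] s IH]; simpl.
  - destruct (existsb (Nat.eqb w) rm); reflexivity.
  - destruct (existsb (Nat.eqb k) rm) eqn:Ek; simpl; rewrite IH;
      destruct (Nat.eqb_spec w k); subst; rewrite ?Ek; reflexivity.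
Qed.

Lemma lookup_app l1 l2 w :
  lookup (l1 ++ l2) w = if existsb (Nat.eqb w) (map fst l1) then lookup l1 w else lookup l2 w.
Proof.
  induction l1 as [|[k v] l1 IH]; simpl; auto.
  destruct (Nat.eqb_spec w k); simpl; auto.
Qed.

Lemma lookup_notin_dom l w : ~ In w (map fst l) -> lookup l w = w.
Proof.
  induction l as [|[k v] l IH]; simpl; auto; intro H.
  destruct (Nat.eqb_spec w k); subst; [exfalso; auto | apply IH; tauto].
Qed.

Lemma lookup_in_range l w : lookup l w = w \/ exists k, In (k, lookup l w) l.
Proof.
  induction l as [|[k v] l IH]; simpl; auto.
  destruct (Nat.eqb_spec w k); subst; eauto.
  destruct IH as [E | [k' E]]; eauto.
Qed.

Lemma in_map_fst_combine w (ys zs : list nat) :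
  length ys = length zs -> In w (map fst (combine ys zs)) <-> In w ys.
Proof.
  revert zs; induction ys; destruct zs; simpl; intros; try discriminate; try tauto.
  rewrite IHys by lia; tauto.
Qed.

Lemma flat_map_fv_vars xs : flat_map fv_term (map Var xs) = xs.
Proof. induction xs; simpl; congruence. Qed.

Definition agree_on (l : list nat) (r r' : env) : Prop :=
  forall w, In w l -> env_lookup r w = env_lookup r' w.

Lemma agree_on_incl l l' r r' : incl l l' -> agree_on l' r r' -> agree_on l r r'.
Proof. intros Hi H w Hw; apply H, Hi, Hw. Qed.

Ltac incl_tac := intros ? ?; simpl in *; rewrite ?in_app_iff in *; tauto.

Lemma env_lookup_cons_eq x o r : env_lookup ((x, o) :: r) x = o.
Proof. simpl; rewrite Nat.eqb_refl; reflexivity. Qed.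

Lemma env_lookup_cons_neq x o r w : w <> x -> env_lookup ((x, o) :: r) w = env_lookup r w.
Proof. intro H; simpl; destruct (Nat.eqb_spec w x); congruence. Qed.

Lemma env_extend_notin As ys r t w :
  ~ In w ys -> env_lookup (env_extend r ys As t) w = env_lookup r w.
Proof.
  revert ys r t; induction As; intros ys r t H; simpl; auto.
  destruct ys as [|y ys]; simpl; auto; simpl in H.
  rewrite IHAs by tauto; apply env_lookup_cons_neq; intro; subst; tauto.
Qed.

Lemma env_extend_agree As ys r r' t w : length ys = length As ->
  (~ In w ys -> env_lookup r w = env_lookup r' w) ->
  env_lookup (env_extend r ys As t) w = env_lookup (env_extend r' ys As t) w.
Proof.
  revert ys r r' t; induction As; intros ys r r' t Hl H; destruct ys;
    simpl in *; try discriminate; auto.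
  apply IHAs; [lia|]; intro Hn; simpl; destruct (Nat.eqb_spec w n); auto.
  apply H; intros [E|E]; [congruence | contradiction].
Qed.

Definition env_swap (a b : nat) (r : env) : env := map (fun p => (sw a b (fst p), snd p)) r.

Lemma env_swap_invol a b r : env_swap a b (env_swap a b r) = r.
Proof. induction r as [|[k o] r IH]; simpl; rewrite ?sw_invol; congruence. Qed.

Lemma env_lookup_swap a b r w : env_lookup (env_swap a b r) (sw a b w) = env_lookup r w.
Proof.
  induction r as [|[k o] r IH]; simpl; auto.
  destruct (Nat.eqb_spec (sw a b w) (sw a b k)) as [E|E], (Nat.eqb_spec w k);
    subst; auto; [apply sw_inj in E|]; contradiction.
Qed.

Lemma env_lookup_swap' a b r w : env_lookup (env_swap a b r) w = env_lookup r (sw a b w).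
Proof. rewrite <- (sw_invol a b w) at 1; apply env_lookup_swap. Qed.

Lemma env_swap_extend a b As ys r t :
  env_swap a b (env_extend r ys As t) = env_extend (env_swap a b r) (map (sw a b) ys) As t.
Proof. revert ys r t; induction As; intros ys r t; simpl; auto; destruct ys; simpl; auto. Qed.

(** * Invariance of evaluation under substitution and renaming *)

Definition agree_subst (l : list nat) (s : list (nat * nat)) (r r' : env) : Prop :=
  forall w, In w l -> env_lookup r w = env_lookup r' (lookup s w).

(* No name substituted by [s] is captured by a binder in [l]. *)
Definition subst_avoids (s : list (nat * nat)) (l : list nat) : Prop :=
  forall w, lookup s w = w \/ ~ In (lookup s w) l.

Lemma subst_avoids_drop s l l' rm : subst_avoids s l -> incl l' l -> subst_avoids (drop s rm) l'.
Proof.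
  intros H Hi w; rewrite lookup_drop; destruct (existsb (Nat.eqb w) rm); auto.
  destruct (H w); auto.
Qed.

Lemma agree_subst_binders s bs r r' r1 r1' fvl l :
  (forall w, In w bs -> env_lookup r1 w = env_lookup r1' w) ->
  (forall w, ~ In w bs -> env_lookup r1 w = env_lookup r w) ->
  (forall w, ~ In w bs -> env_lookup r1' w = env_lookup r' w) ->
  subst_avoids s l -> incl bs l ->
  agree_subst (remove_all fvl bs) s r r' ->
  agree_subst fvl (drop s bs) r1 r1'.
Proof.
  intros H1 H2 H3 Hs Hi H w Hw; rewrite lookup_drop.
  destruct (existsb (Nat.eqb w) bs) eqn:E; [apply existsb_eqb_in in E; auto|].
  assert (Hn : ~ In w bs) by (rewrite <- existsb_eqb_in; congruence).
  rewrite H2, H by (try apply in_remove_all; auto).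
  rewrite H3; auto; destruct (Hs w) as [Hq|Hq]; [rewrite Hq; auto|].
  intro Hc; apply Hq, Hi, Hc.
Qed.

Lemma agree_subst_binder s x o r r' fvl l :
  subst_avoids s l -> In x l ->
  agree_subst (remove_all fvl [x]) s r r' ->
  agree_subst fvl (drop s [x]) ((x, o) :: r) ((x, o) :: r').
Proof.
  intros Hs Hx; apply agree_subst_binders with (l := l); auto.
  - intros w [<-|[]]; rewrite !env_lookup_cons_eq; reflexivity.
  - intros w Hw; apply env_lookup_cons_neq; intro; subst; apply Hw; left; reflexivity.
  - intros w Hw; apply env_lookup_cons_neq; intro; subst; apply Hw; left; reflexivity.
  - intros z [<-|[]]; assumption.
Qed.

Lemma eval_term_args_subst :
  (forall r M n p, eval_term r M n p -> forall s r',
     agree_subst (fv_term M) s r r' -> eval_term r' (subst_term s M) n p) /\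
  (forall r Ns cs As args, eval_args r Ns cs As args -> forall s r',
     agree_subst (flat_map fv_term Ns) s r r' -> eval_args r' (map (subst_term s) Ns) cs As args).
Proof.
  apply eval_term_args_mind; simpl; intros; unfold agree_subst in *.
  - constructor; rewrite <- H0; simpl; auto.
  - econstructor; [apply H0 | apply H2 | apply H4]; intros; apply H5; rewrite !in_app_iff; auto.
  - constructor; [apply H0 | apply H2]; intros; apply H3; rewrite !in_app_iff; auto.
  - constructor.
  - constructor; [apply H0 | apply H2]; intros; apply H3; rewrite !in_app_iff; auto.
Qed.

Lemma eval_decl_subst r d n p : eval_decl r d n p -> forall s r',
  subst_avoids s (bv_decl d) -> agree_subst (fv_decl d) s r r' ->
  eval_decl r' (subst_decl s d) n p.
Proof.
  induction 1; simpl; intros s0 r' Hs Ha.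
  - constructor; apply eval_term_args_subst with r; auto.
  - apply eval_let_none, IHeval_decl.
    + apply subst_avoids_drop with (1 := Hs); incl_tac.
    + apply agree_subst_binder with (l := x :: bv_value v ++ bv_decl d); simpl; auto.
      intros w Hw; apply Ha; rewrite in_app_iff; auto.
  - eapply eval_let_zero, IHeval_decl.
    + apply subst_avoids_drop with (1 := Hs); incl_tac.
    + apply agree_subst_binder with (l := x :: bv_value v ++ bv_decl d); simpl; auto.
      intros w Hw; apply Ha; rewrite in_app_iff; auto.
  - apply eval_let_star, IHeval_decl.
    + apply subst_avoids_drop with (1 := Hs); incl_tac.
    + apply agree_subst_binder with (l := x :: bv_decl d); simpl; auto.
  - set (l := x :: (y :: ys ++ bv_decl B) ++ bv_decl d) in Hs.
    eapply eval_let_lam; [exact H | intros a args; apply H1 | apply IHeval_decl].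
    + apply subst_avoids_drop with (1 := Hs); unfold l; incl_tac.
    + apply agree_subst_binders with (r := r) (r' := r') (l := l).
      * intros w Hw; apply env_extend_agree; [simpl; congruence | intro; contradiction].
      * intros w Hw; apply env_extend_notin; assumption.
      * intros w Hw; apply env_extend_notin; assumption.
      * assumption.
      * unfold l; incl_tac.
      * intros w Hw; apply Ha; rewrite in_app_iff; auto.
    + apply subst_avoids_drop with (1 := Hs); unfold l; incl_tac.
    + apply agree_subst_binder with (l := l); [assumption | unfold l; simpl; auto |].
      intros w Hw; apply Ha; rewrite in_app_iff; auto.
Qed.

Lemma subst_term_nil m : subst_term [] m = m.
Proof.
  induction m using term_ind_nested; simpl; try congruence.
  rewrite IHm1, IHm2; f_equal; induction H; simpl; congruence.
Qed.

Lemma subst_decl_nil d : subst_decl [] d = d.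
Proof.
  apply (decl_mind (fun v => subst_value [] v = v) (fun d => subst_decl [] d = d));
    simpl; intros; rewrite ?subst_term_nil; congruence.
Qed.

Lemma eval_term_agree r r' M n p :
  eval_term r M n p -> agree_on (fv_term M) r r' -> eval_term r' M n p.
Proof. intros H Ha; rewrite <- (subst_term_nil M); apply eval_term_args_subst with r; auto. Qed.

Lemma eval_args_agree r r' Ns cs As args :
  eval_args r Ns cs As args -> agree_on (flat_map fv_term Ns) r r' -> eval_args r' Ns cs As args.
Proof.
  intros H Ha; rewrite <- (map_id Ns), (map_ext id (subst_term [])) by (intro; rewrite subst_term_nil; auto).
  apply eval_term_args_subst with r; auto.
Qed.

Lemma eval_decl_agree r r' d n p :
  eval_decl r d n p -> agree_on (fv_decl d) r r' -> eval_decl r' d n p.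
Proof.
  intros H Ha; rewrite <- (subst_decl_nil d); apply eval_decl_subst with r; auto.
  intro w; left; reflexivity.
Qed.

Lemma eval_term_args_swap a b :
  (forall r M n p, eval_term r M n p -> eval_term (env_swap a b r) (swap_term a b M) n p) /\
  (forall r Ns cs As args, eval_args r Ns cs As args ->
     eval_args (env_swap a b r) (map (swap_term a b) Ns) cs As args).
Proof.
  apply eval_term_args_mind; simpl; intros; try (econstructor; eauto; fail).
  constructor; rewrite env_lookup_swap; assumption.
Qed.

Lemma eval_decl_swap a b r d n p :
  eval_decl r d n p -> eval_decl (env_swap a b r) (swap_decl a b d) n p.
Proof.
  induction 1; simpl.
  - constructor; apply eval_term_args_swap; assumption.
  - apply eval_let_none; exact IHeval_decl.
  - eapply eval_let_zero; exact IHeval_decl.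
  - apply eval_let_star; exact IHeval_decl.
  - eapply eval_let_lam; [rewrite length_map; eassumption | | exact IHeval_decl].
    intros a0 args; specialize (H1 a0 args); rewrite env_swap_extend in H1; exact H1.
Qed.

(** * Invariance under structural congruence *)

Definition value_denotes (r : env) (v : value) (s : svalue) : Prop :=
  match v with
  | Star => s = existT sem_vty VUnit tt
  | Lam y ys B => exists A As rt (f : sem_vty (VArr A As rt)),
      s = existT sem_vty (VArr A As rt) f /\ length ys = length As /\
      forall a args, eval_decl (env_extend r (y :: ys) (A :: As) (a, args)) B
                       (fst (f a args)) (existT sem_ty rt (snd (f a args)))
  end.

Definition binding_ok (r : env) (u : usage) (v : value) (o : option svalue) : Prop :=
  match o with None => True | Some s => u = U0 \/ value_denotes r v s end.

Lemma eval_let_iff r x u v d n p :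
  eval_decl r (DLet x u v d) n p <->
  exists o, binding_ok r u v o /\ eval_decl ((x, o) :: r) d n p.
Proof.
  split.
  - intro H; inversion H; subst.
    + exists None; simpl; auto.
    + exists (Some s); simpl; auto.
    + exists (Some (existT sem_vty VUnit tt)); simpl; auto.
    + eexists (Some _); split; [|eassumption]; right; exists A, As, rt, f; auto.
  - intros [[s|] [Hok He]]; [|apply eval_let_none; assumption].
    destruct Hok as [->|Hv]; [eapply eval_let_zero; eassumption|].
    destruct v as [|y ys B]; simpl in Hv.
    + subst; apply eval_let_star; assumption.
    + destruct Hv as (A & As & rt & f & -> & Hl & Hf); eapply eval_let_lam; eassumption.
Qed.

Lemma agree_on_sym l r r' : agree_on l r r' -> agree_on l r' r.
Proof. intros H w Hw; symmetry; auto. Qed.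

Lemma agree_on_cons l x o r r' :
  agree_on (remove_all l [x]) r r' -> agree_on l ((x, o) :: r) ((x, o) :: r').
Proof.
  intros H w Hw; simpl; destruct (Nat.eqb_spec w x); auto.
  apply H, in_remove_all; split; auto; intros [E|[]]; auto.
Qed.

Lemma agree_on_cons_fresh l x o r : ~ In x l -> agree_on l ((x, o) :: r) r.
Proof. intros H w Hw; apply env_lookup_cons_neq; intro; subst; contradiction. Qed.

Lemma agree_on_cons_comm l x1 o1 x2 o2 r : x1 <> x2 ->
  agree_on l ((x2, o2) :: (x1, o1) :: r) ((x1, o1) :: (x2, o2) :: r).
Proof.
  intros H w _; simpl; destruct (Nat.eqb_spec w x2), (Nat.eqb_spec w x1); subst; congruence.
Qed.

Lemma agree_on_swap_fresh l a b r : ~ In a l -> ~ In b l -> agree_on l r (env_swap a b r).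
Proof.
  intros Ha Hb w Hw; rewrite env_lookup_swap', sw_id; auto; intro; subst; contradiction.
Qed.

Lemma value_denotes_swap a b r v s :
  value_denotes r v s -> value_denotes (env_swap a b r) (swap_value a b v) s.
Proof.
  destruct v as [|y ys B]; cbn [value_denotes swap_value]; auto.
  intros (A & As & rt & f & -> & Hl & Hf); exists A, As, rt, f.
  do 2 (split; [rewrite ?length_map; auto|]); intros a0 args.
  change (sw a b y :: map (sw a b) ys) with (map (sw a b) (y :: ys)).
  rewrite <- env_swap_extend; apply eval_decl_swap, Hf.
Qed.

Lemma value_denotes_agree r r' v s :
  value_denotes r v s -> agree_on (fv_value v) r r' -> value_denotes r' v s.
Proof.
  destruct v as [|y ys B]; [simpl; auto|]; cbn [value_denotes fv_value].
  intros (A & As & rt & f & -> & Hl & Hf) Ha; exists A, As, rt, f; do 2 (split; auto).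
  intros a0 args; apply eval_decl_agree with (1 := Hf a0 args).
  intros w Hw; destruct (in_dec Nat.eq_dec w (y :: ys)).
  - apply env_extend_agree; [simpl; congruence | contradiction].
  - rewrite !env_extend_notin by assumption; apply Ha, in_remove_all; auto.
Qed.

Lemma binding_ok_agree r r' u v o :
  binding_ok r u v o -> agree_on (fv_value v) r r' -> binding_ok r' u v o.
Proof. destruct o; simpl; auto; intros [H|H] Ha; [left | right; eapply value_denotes_agree]; eauto. Qed.

Lemma eval_alpha_let x x' u v d r n p : (x' = x \/ ~ In x' (fv_decl d)) ->
  eval_decl r (DLet x u v d) n p <-> eval_decl r (DLet x' u v (swap_decl x x' d)) n p.
Proof.
  intro Hx'; rewrite !eval_let_iff.
  assert (Ha : forall o, agree_on (fv_decl d) ((x, o) :: r) ((x, o) :: env_swap x x' r)).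
  { intro o; apply agree_on_cons, agree_on_swap_fresh;
      rewrite in_remove_all; simpl; intros [Hw Hn]; destruct Hx'; auto. }
  split; intros [o [Hok He]]; exists o; split; auto.
  - apply eval_decl_agree with (r' := (x, o) :: env_swap x x' r), (eval_decl_swap x x') in He;
      [|apply Ha].
    simpl in He; rewrite sw_l, env_swap_invol in He; exact He.
  - apply (eval_decl_swap x x') in He; simpl in He.
    rewrite sw_r, (proj2 (swap_value_decl_invol x x')) in He.
    apply eval_decl_agree with (1 := He), agree_on_sym, Ha.
Qed.

Lemma eval_let_comm x1 u1 v1 x2 u2 v2 d r n p :
  x1 <> x2 -> ~ In x1 (fv_value v2) -> ~ In x2 (fv_value v1) ->
  eval_decl r (DLet x1 u1 v1 (DLet x2 u2 v2 d)) n p ->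
  eval_decl r (DLet x2 u2 v2 (DLet x1 u1 v1 d)) n p.
Proof.
  intros H12 H1 H2; rewrite eval_let_iff; intros [o1 [Hok1 He1]].
  rewrite eval_let_iff in He1; destruct He1 as [o2 [Hok2 He2]].
  apply eval_let_iff; exists o2; split.
  - apply binding_ok_agree with (1 := Hok2), agree_on_cons_fresh, H1.
  - apply eval_let_iff; exists o1; split.
    + apply binding_ok_agree with (1 := Hok1), agree_on_sym, agree_on_cons_fresh, H2.
    + apply eval_decl_agree with (1 := He2), agree_on_cons_comm, H12.
Qed.

Lemma eval_let_gc x u v d r n p :
  ~ In x (fv_decl d) -> eval_decl r (DLet x u v d) n p <-> eval_decl r d n p.
Proof.
  intro Hx; rewrite eval_let_iff; split.
  - intros [o [_ He]]; apply eval_decl_agree with (1 := He), agree_on_cons_fresh, Hx.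
  - intro He; exists None; split; [exact I|].
    apply eval_decl_agree with (1 := He), agree_on_sym, agree_on_cons_fresh, Hx.
Qed.

Lemma value_denotes_alpha a b y ys d r s :
  ~ In a (fv_value (Lam y ys d)) -> ~ In b (fv_value (Lam y ys d)) ->
  value_denotes r (Lam y ys d) s <-> value_denotes r (swap_value a b (Lam y ys d)) s.
Proof.
  intros Ha Hb; pose proof (agree_on_swap_fresh _ _ _ r Ha Hb) as Hag; split; intro H.
  - apply value_denotes_agree with (r' := env_swap a b r), (value_denotes_swap a b) in H;
      [|exact Hag].
    rewrite env_swap_invol in H; exact H.
  - apply (value_denotes_swap a b) in H; rewrite (proj1 (swap_value_decl_invol a b)) in H.
    apply value_denotes_agree with (1 := H), agree_on_sym, Hag.
Qed.

Scheme sc_step_mind := Minimality for sc_step Sort Prop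
  with sc_vstep_mind := Minimality for sc_vstep Sort Prop.

Lemma eval_decl_sc_step d d' : sc_step d d' ->
  forall r n p, eval_decl r d n p <-> eval_decl r d' n p.
Proof.
  revert d d'; apply (sc_step_mind
    (fun d d' => forall r n p, eval_decl r d n p <-> eval_decl r d' n p)
    (fun v v' => forall r s, value_denotes r v s <-> value_denotes r v' s)).
  - intros; apply eval_alpha_let; assumption.
  - intros; split; apply eval_let_comm; auto.
  - intros; apply eval_let_gc; assumption.
  - intros x u v d d' _ IH r n p; rewrite !eval_let_iff.
    split; intros [o [Hok He]]; exists o; split; auto; apply IH; auto.
  - intros x u v v' d _ IH r n p; rewrite !eval_let_iff.
    split; intros [[s|] [Hok He]]; eexists; split; try eassumption;
      destruct Hok; simpl; auto; right; apply IH; assumption.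
  - intros; apply value_denotes_alpha; assumption.
  - intros y ys d d' _ IH r s; simpl.
    split; intros (A & As & rt & f & E & Hl & Hf); exists A, As, rt, f;
      repeat split; auto; intros; apply IH; auto.
Qed.

Lemma eval_decl_sc d d' : sc d d' -> forall r n p, eval_decl r d n p <-> eval_decl r d' n p.
Proof.
  induction 1; intros.
  - apply eval_decl_sc_step; assumption.
  - reflexivity.
  - symmetry; auto.
  - etransitivity; eauto.
Qed.

Inductive eval_lets : env -> list binding -> env -> Prop :=
| eval_lets_nil r : eval_lets r [] r
| eval_lets_cons r x u v bs o r' :
    binding_ok r u v o -> eval_lets ((x, o) :: r) bs r' -> eval_lets r ((x, u, v) :: bs) r'.

Lemma eval_mk_iff bs r M n p :
  eval_decl r (mk bs M) n p <-> exists r', eval_lets r bs r' /\ eval_term r' M n p.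
Proof.
  revert r; induction bs as [|[[x u] v] bs IH]; intro r; simpl.
  - split.
    + intro H; inversion H; subst; exists r; split; [constructor | assumption].
    + intros [r' [H1 H2]]; inversion H1; subst; constructor; assumption.
  - rewrite eval_let_iff; split.
    + intros [o [Hok He]]; apply IH in He; destruct He as [r' [H1 H2]].
      exists r'; split; [econstructor|]; eassumption.
    + intros [r' [H1 H2]]; inversion H1; subst; exists o; split; [|apply IH]; eauto.
Qed.

Lemma eval_lets_app l1 l2 r r'' :
  eval_lets r (l1 ++ l2) r'' <-> exists r', eval_lets r l1 r' /\ eval_lets r' l2 r''.
Proof.
  revert r; induction l1 as [|b l1 IH]; intro r; simpl.
  - split; [intro; exists r; split; [constructor | assumption]|].
    intros [r' [H1 H2]]; inversion H1; subst; assumption.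
  - split.
    + intro H; inversion H as [|r0 x u v bs o r0' Hok Hrest]; subst.
      apply IH in Hrest; destruct Hrest as [r' [H1 H2]].
      exists r'; split; [econstructor|]; eassumption.
    + intros [r' [H1 H2]]; inversion H1; subst; econstructor; [eassumption|]; apply IH; eauto.
Qed.

Lemma eval_lets_notin bs r r' w :
  eval_lets r bs r' -> ~ In w (binders bs) -> env_lookup r' w = env_lookup r w.
Proof.
  induction 1; intro Hn; simpl in *; auto.
  rewrite IHeval_lets by tauto; apply env_lookup_cons_neq; intro; subst; auto.
Qed.

Lemma mk_prefix_body d : mk (prefix d) (body d) = d.
Proof. induction d; simpl; congruence. Qed.

Lemma eval_var_inv r z c A a :
  eval_term r (Var z) c (existT sem_ty (TV A) a) ->
  c = 0 /\ env_lookup r z = Some (existT sem_vty A a).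
Proof.
  intro H; remember (Var z) as M; remember (existT sem_ty (TV A) a) as q.
  destruct H; try discriminate; injection HeqM as ->; split; auto; rewrite H.
  destruct s as [B b]; simpl in *.
  pose proof (f_equal (@projT1 _ _) Heqq) as E; simpl in E; injection E as ->.
  apply inj_pair2 in Heqq; subst; reflexivity.
Qed.

Lemma eval_par_inv r M1 M2 n p : eval_term r (Par M1 M2) n p ->
  exists c1 c2, eval_term r M1 c1 (existT sem_ty TB tt) /\
    eval_term r M2 c2 (existT sem_ty TB tt) /\ n = c1 + c2 /\ p = existT sem_ty TB tt.
Proof. intro H; inversion H; subst; do 2 eexists; eauto. Qed.

Definition apply_args (M : term) (l : list term) : term :=
  match l with [] => M | N :: Ns => App M N Ns end.

Lemma eval_apply_args_inv r M L n p : L <> [] -> eval_term r (apply_args M L) n p ->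
  exists cM cs A As rt (f : sem_vty (VArr A As rt)) a args,
    eval_term r M cM (existT sem_ty (TV (VArr A As rt)) f) /\
    eval_args r L cs (A :: As) (a, args) /\
    n = cM + cs + S (fst (f a args)) /\ p = existT sem_ty rt (snd (f a args)).
Proof.
  destruct L as [|N Ns]; [contradiction|]; intros _ H; inversion H; subst.
  do 8 eexists; split; [eassumption|]; split; [constructor; eassumption|].
  split; [lia | reflexivity].
Qed.

Lemma eval_args_cons_inv r L cs A As a args : eval_args r L cs (A :: As) (a, args) ->
  exists N Ns c cs', L = N :: Ns /\ cs = c + cs' /\
    eval_term r N c (existT sem_ty (TV A) a) /\ eval_args r Ns cs' As args.
Proof.
  enough (H : forall As0 t, eval_args r L cs As0 t ->
    match As0 return tuple_type (map sem_vty As0) -> Prop with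
    | [] => fun _ => True
    | A :: As => fun t => exists N Ns c cs', L = N :: Ns /\ cs = c + cs' /\
        eval_term r N c (existT sem_ty (TV A) (fst t)) /\ eval_args r Ns cs' As (snd t)
    end t) by exact (H (A :: As) (a, args)).
  intros As0 t []; simpl; eauto 8.
Qed.

Lemma eval_apply_args_intro r M L cM cs A As rt (f : sem_vty (VArr A As rt)) a args :
  eval_term r M cM (existT sem_ty (TV (VArr A As rt)) f) ->
  eval_args r L cs (A :: As) (a, args) ->
  eval_term r (apply_args M L) (cM + cs + S (fst (f a args))) (existT sem_ty rt (snd (f a args))).
Proof.
  intros HM HL; apply eval_args_cons_inv in HL.
  destruct HL as (N & Ns & c & cs' & -> & -> & HN & HNs); simpl.
  replace (cM + (c + cs') + S (fst (f a args))) with (cM + c + cs' + S (fst (f a args))) by lia.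
  econstructor; eassumption.
Qed.

Lemma eval_args_split l1 N l2 r cs As t : eval_args r (l1 ++ N :: l2) cs As t ->
  exists cN pN c0, cs = c0 + cN /\ eval_term r N cN pN /\
    forall r' N' cN', agree_on (flat_map fv_term l1 ++ flat_map fv_term l2) r r' ->
      eval_term r' N' cN' pN -> eval_args r' (l1 ++ N' :: l2) (c0 + cN') As t.
Proof.
  intro H; remember (l1 ++ N :: l2) as L eqn:EL; revert l1 EL.
  induction H as [|r N1 Ns c cs A As a args HN1 HNs IH]; intros l1 EL;
    [destruct l1; discriminate|].
  destruct l1 as [|N0 l1]; simpl in EL; injection EL as -> ->.
  - exists c, (existT sem_ty (TV A) a), cs; split; [lia|]; split; [assumption|].
    intros r' N' cN' Ha HN'; rewrite Nat.add_comm; constructor; [assumption|].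
    apply eval_args_agree with (1 := HNs), Ha.
  - destruct (IH l1 eq_refl) as (cN & pN & c0 & -> & HN & K).
    exists cN, pN, (c + c0); split; [lia|]; split; [assumption|].
    intros r' N' cN' Ha HN'; rewrite <- Nat.add_assoc; constructor.
    + apply eval_term_agree with (1 := HN1), agree_on_incl with (2 := Ha); incl_tac.
    + apply K; [apply agree_on_incl with (2 := Ha); incl_tac | assumption].
Qed.

(* Evaluation is compositional in the hole: the cost splits as [m] plus the
   cost of the hole, and [m] is unchanged when the hole is refilled by a term
   with the same denotation, in an environment agreeing on the context. *)
Definition ctx_decomposes (c : ectx) : Prop :=
  forall r R n p, eval_term r (plug c R) n p ->
  exists nR pR m, n = m + nR /\ eval_term r R nR pR /\
    forall r' R' nR', agree_on (fv_ectx c) r r' -> eval_term r' R' nR' pR ->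
      eval_term r' (plug c R') (m + nR') p.

Lemma ctx_decomposes_hole : ctx_decomposes EHole.
Proof. intros r R n p H; exists n, p, 0; split; [reflexivity|]; split; auto. Qed.

Lemma ctx_decomposes_app_fun c a args : ctx_decomposes c -> ctx_decomposes (EAppF c a args).
Proof.
  intros IH r R n p H; apply (eval_apply_args_inv _ _ (a :: args)) in H; [|discriminate].
  destruct H as (cM & cs & A & As & rt & g & a0 & args0 & HM & HL & -> & ->).
  destruct (IH _ _ _ _ HM) as (nR & pR & m & -> & HR & K).
  exists nR, pR, (m + cs + S (fst (g a0 args0))); split; [lia|]; split; [assumption|].
  intros r' R' nR' Ha HR'.
  replace (m + cs + S (fst (g a0 args0)) + nR') with (m + nR' + cs + S (fst (g a0 args0))) by lia.
  apply (eval_apply_args_intro _ _ (a :: args)).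
  - apply K; [apply agree_on_incl with (2 := Ha); incl_tac | assumption].
  - apply eval_args_agree with (1 := HL), agree_on_incl with (2 := Ha); incl_tac.
Qed.

Lemma plug_app_arg f xs c args R :
  plug (EAppA f xs c args) R = apply_args (Var f) (map Var xs ++ plug c R :: args).
Proof. destruct xs; reflexivity. Qed.

Lemma ctx_decomposes_app_arg f xs c args :
  ctx_decomposes c -> ctx_decomposes (EAppA f xs c args).
Proof.
  intros IH r R n p H; rewrite plug_app_arg in H.
  apply eval_apply_args_inv in H; [|destruct xs; discriminate].
  destruct H as (cM & cs & A & As & rt & g & a0 & args0 & HM & HL & -> & ->).
  destruct (eval_args_split _ _ _ _ _ _ _ HL) as (cN & pN & c0 & -> & HN & KL).
  destruct (IH _ _ _ _ HN) as (nR & pR & m & -> & HR & K).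
  exists nR, pR, (cM + c0 + m + S (fst (g a0 args0))); split; [lia|]; split; [assumption|].
  intros r' R' nR' Ha HR'; rewrite plug_app_arg.
  replace (cM + c0 + m + S (fst (g a0 args0)) + nR')
    with (cM + (c0 + (m + nR')) + S (fst (g a0 args0))) by lia.
  apply eval_apply_args_intro.
  - apply eval_term_agree with (1 := HM), agree_on_incl with (2 := Ha); incl_tac.
  - apply KL.
    + rewrite flat_map_fv_vars; apply agree_on_incl with (2 := Ha); incl_tac.
    + apply K; [apply agree_on_incl with (2 := Ha); incl_tac | assumption].
Qed.

Lemma ctx_decomposes_par_l c M : ctx_decomposes c -> ctx_decomposes (EParL c M).
Proof.
  intros IH r R n p H; apply eval_par_inv in H; destruct H as (c1 & c2 & H1 & H2 & -> & ->).
  destruct (IH _ _ _ _ H1) as (nR & pR & m & -> & HR & K).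
  exists nR, pR, (m + c2); split; [lia|]; split; [assumption|].
  intros r' R' nR' Ha HR'; replace (m + c2 + nR') with (m + nR' + c2) by lia; constructor.
  - apply K; [apply agree_on_incl with (2 := Ha); incl_tac | assumption].
  - apply eval_term_agree with (1 := H2), agree_on_incl with (2 := Ha); incl_tac.
Qed.

Lemma ctx_decomposes_par_r M c : ctx_decomposes c -> ctx_decomposes (EParR M c).
Proof.
  intros IH r R n p H; apply eval_par_inv in H; destruct H as (c1 & c2 & H1 & H2 & -> & ->).
  destruct (IH _ _ _ _ H2) as (nR & pR & m & -> & HR & K).
  exists nR, pR, (c1 + m); split; [lia|]; split; [assumption|].
  intros r' R' nR' Ha HR'; rewrite <- Nat.add_assoc; constructor.
  - apply eval_term_agree with (1 := H1), agree_on_incl with (2 := Ha); incl_tac.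
  - apply K; [apply agree_on_incl with (2 := Ha); incl_tac | assumption].
Qed.

Lemma all_ctx_decompose c : ctx_decomposes c.
Proof.
  induction c.
  - apply ctx_decomposes_hole.
  - apply ctx_decomposes_app_fun; assumption.
  - apply ctx_decomposes_app_arg; assumption.
  - apply ctx_decomposes_par_l; assumption.
  - apply ctx_decomposes_par_r; assumption.
Qed.

(** * Reduction decreases the cost *)

Lemma env_extend_vars r3 zs cs As args : eval_args r3 (map Var zs) cs As args ->
  forall r1 ys w, length ys = length zs ->
  env_lookup (env_extend r1 ys As args) w =
    if existsb (Nat.eqb w) ys then env_lookup r3 (lookup (substitution ys zs) w)
    else env_lookup r1 w.
Proof.
  intro H; remember (map Var zs) as Ns eqn:EN; revert zs EN.
  induction H as [r3|r3 N Ns c cs A As a args HN HNs IH]; intros zs EN r1 ys w Hl.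
  - destruct zs; [|discriminate]; destruct ys; [reflexivity | discriminate].
  - destruct zs as [|z zs]; [discriminate|]; injection EN as -> ->.
    destruct ys as [|y ys]; [discriminate|]; simpl in Hl.
    apply eval_var_inv in HN; destruct HN as [_ Hz].
    simpl env_extend; rewrite (IH zs eq_refl) by lia.
    unfold substitution; simpl combine; simpl rev; rewrite lookup_app.
    replace (existsb (Nat.eqb w) (map fst (rev (combine ys zs)))) with (existsb (Nat.eqb w) ys)
      by (apply Bool.eq_true_iff_eq; rewrite !existsb_eqb_in, map_rev, <- in_rev,
            in_map_fst_combine by lia; reflexivity).
    simpl existsb; destruct (existsb (Nat.eqb w) ys); [rewrite Bool.orb_true_r; reflexivity|].
    rewrite Bool.orb_false_r; simpl; destruct (Nat.eqb_spec w y); subst; auto.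
Qed.

Lemma value_denotes_lam_inv r y ys B A As rt (f : sem_vty (VArr A As rt)) :
  value_denotes r (Lam y ys B) (existT sem_vty (VArr A As rt) f) ->
  forall a args, eval_decl (env_extend r (y :: ys) (A :: As) (a, args)) B
                   (fst (f a args)) (existT sem_ty rt (snd (f a args))).
Proof.
  intros (A' & As' & rt' & f' & E & _ & Hf).
  pose proof (f_equal (@projT1 _ _) E) as E1; simpl in E1; injection E1 as <- <- <-.
  apply inj_pair2 in E; subst; exact Hf.
Qed.

Lemma eval_beta_body r1 r3 y ys B zs cs A As rt (f : sem_vty (VArr A As rt)) a args :
  value_denotes r1 (Lam y ys B) (existT sem_vty (VArr A As rt) f) ->
  eval_args r3 (map Var zs) cs (A :: As) (a, args) ->
  length zs = S (length ys) -> disjoint (bv_decl B) zs ->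
  agree_on (fv_value (Lam y ys B)) r1 r3 ->
  eval_decl r3 (subst_decl (substitution (y :: ys) zs) B)
    (fst (f a args)) (existT sem_ty rt (snd (f a args))).
Proof.
  intros Hv HL Hlen Hbv Hag.
  apply eval_decl_subst with (1 := value_denotes_lam_inv _ _ _ _ _ _ _ _ Hv a args).
  - intro w; destruct (lookup_in_range (substitution (y :: ys) zs) w) as [E|[k E]];
      [left; exact E | right; intro Hin].
    unfold substitution in E; apply in_rev, in_combine_r in E; exact (Hbv _ Hin E).
  - intros w Hw; rewrite (env_extend_vars _ _ _ _ _ HL) by (simpl; lia).
    destruct (existsb (Nat.eqb w) (y :: ys)) eqn:Ew; [reflexivity|].
    assert (Hn : ~ In w (y :: ys)) by (rewrite <- existsb_eqb_in; congruence).
    rewrite lookup_notin_dom.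
    + apply Hag, in_remove_all; auto.
    + unfold substitution; rewrite map_rev, <- in_rev, in_map_fst_combine; auto; simpl; lia.
Qed.

Lemma eval_decl_red0 d d' r n p :
  red0 d d' -> eval_decl r d n p -> exists n', n' < n /\ eval_decl r d' n' p.
Proof.
  intros Hred H; destruct Hred as [lets1 lets2 x u y ys B c z zs Hu Hlen Hx Hdfv Hbv Hbind].
  set (B' := subst_decl (substitution (y :: ys) (z :: zs)) B) in *.
  apply eval_mk_iff in H; destruct H as (r3 & HP & HE).
  apply eval_lets_app in HP; destruct HP as (r1 & HP1 & HP2).
  inversion HP2 as [|r0 x0 u0 v0 bs o r0' Hok HP3]; subst.
  destruct (all_ctx_decompose c _ _ _ _ HE) as (nR & pR & m & -> & HR & K).
  apply (eval_apply_args_inv _ (Var x) (map Var (z :: zs))) in HR; [|discriminate].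
  destruct HR as (cM & cs & A & As & rt & f & a & args & Hx3 & HL & -> & ->).
  apply eval_var_inv in Hx3; destruct Hx3 as [-> Hx3].
  rewrite (eval_lets_notin _ _ _ _ HP3 Hx), env_lookup_cons_eq in Hx3; subst o.
  destruct Hok as [Hu0|Hv]; [contradiction|].
  assert (Hag : agree_on (fv_value (Lam y ys B)) r1 r3).
  { intros w Hw; rewrite (eval_lets_notin _ _ _ _ HP3), env_lookup_cons_neq; auto;
      intro; apply (Hdfv w Hw); subst; simpl; auto. }
  pose proof (eval_beta_body _ _ _ _ _ _ _ _ _ _ _ _ _ Hv HL ltac:(simpl; lia) Hbv Hag) as HB.
  fold B' in HB; rewrite <- (mk_prefix_body B') in HB; apply eval_mk_iff in HB.
  destruct HB as (r4 & HP4 & HE4).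
  exists (m + fst (f a args)); split; [lia|].
  apply eval_mk_iff; exists r4; split.
  - apply eval_lets_app; exists r1; split; [assumption|].
    apply eval_lets_cons with (o := Some (existT sem_vty (VArr A As rt) f)); [right; exact Hv|].
    apply eval_lets_app; exists r3; split; assumption.
  - apply K; [|assumption].
    intros w Hw; symmetry; apply (eval_lets_notin _ _ _ _ HP4); intro Hc; exact (Hbind _ Hc Hw).
Qed.

Lemma eval_decl_red d d' r n p :
  red d d' -> eval_decl r d n p -> exists n', n' < n /\ eval_decl r d' n' p.
Proof.
  intros (d1 & d1' & Hsc1 & Hr & Hsc2) He.
  apply (eval_decl_sc _ _ Hsc1) in He.
  destruct (eval_decl_red0 _ _ _ _ _ Hr He) as (n' & Hlt & He').
  exists n'; split; [assumption|]; apply (eval_decl_sc _ _ Hsc2), He'.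
Qed.

Lemma eval_decl_no_infinite_red r D n p : eval_decl r D n p ->
  ~ (exists f : nat -> decl, f 0 = D /\ forall k, red (f k) (f (S k))).
Proof.
  intros He [f [<- Hs]]; revert He; generalize 0 as k.
  induction n as [n IH] using (well_founded_induction lt_wf); intros k He.
  destruct (eval_decl_red _ _ _ _ _ (Hs k) He) as (n' & Hlt & He').
  exact (IH n' Hlt (S k) He').
Qed.

(** * Typed declarations have a denotation *)

Section HasTypeTermInd.
Variable P : ctx -> term -> ty -> Prop.
Hypothesis P_var : forall G x A, lookupT G x = Some A -> P G (Var x) (TV A).
Hypothesis P_app : forall G M N Ns A As al,
  P G M (TV (VArr A As al)) -> P G N (TV A) ->
  Forall2 (fun Ni Ai => P G Ni (TV Ai)) Ns As -> P G (App M N Ns) al.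
Hypothesis P_par : forall G M1 M2, P G M1 TB -> P G M2 TB -> P G (Par M1 M2) TB.
Fixpoint has_type_term_ind_nested G M t (H : has_type_term G M t) {struct H} : P G M t :=
  match H in has_type_term G M t return P G M t with
  | T_Var G x A e => P_var G x A e
  | T_App G M N Ns A As al HM HN HNs =>
      P_app G M N Ns A As al (has_type_term_ind_nested _ _ _ HM)
        (has_type_term_ind_nested _ _ _ HN)
        ((fix F Ns As (h : Forall2 (fun Ni Ai => has_type_term G Ni (TV Ai)) Ns As)
            : Forall2 (fun Ni Ai => P G Ni (TV Ai)) Ns As :=
          match h in Forall2 _ Ns As return Forall2 (fun Ni Ai => P G Ni (TV Ai)) Ns As with
          | Forall2_nil _ => Forall2_nil _
          | Forall2_cons _ _ h1 h2 => Forall2_cons _ _ (has_type_term_ind_nested _ _ _ h1) (F _ _ h2)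
          end) Ns As HNs)
  | T_Par G M1 M2 H1 H2 =>
      P_par G M1 M2 (has_type_term_ind_nested _ _ _ H1) (has_type_term_ind_nested _ _ _ H2)
  end.
End HasTypeTermInd.

Definition env_models (G : ctx) (r : env) : Prop :=
  forall x A, lookupT G x = Some A -> exists v, env_lookup r x = Some (existT sem_vty A v).

Lemma env_models_cons G r x A v :
  env_models G r -> env_models ((x, A) :: G) ((x, Some (existT sem_vty A v)) :: r).
Proof.
  intros Hm z B Hz; simpl in *; destruct (Nat.eqb_spec z x); eauto.
  injection Hz as <-; eauto.
Qed.

Lemma env_models_extend ys As G r t : env_models G r -> length ys = length As ->
  env_models (extend_many G ys As) (env_extend r ys As t).
Proof.
  revert As G r t; induction ys as [|y ys IH]; intros As G r t Hm Hl;
    destruct As as [|A As]; simpl in *; try discriminate; auto.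
  apply (IH As ((y, A) :: G)); [apply env_models_cons, Hm | lia].
Qed.

Lemma typed_term_evaluates G M al : has_type_term G M al ->
  forall r, env_models G r -> exists n v, eval_term r M n (existT sem_ty al v).
Proof.
  intro H; induction H as [G x A Hx | G M N Ns A As al IHM IHN IHs | G M1 M2 IH1 IH2]
    using has_type_term_ind_nested; intros r Hm.
  - destruct (Hm x A Hx) as [v Hv]; exists 0, v; apply (eval_var r x (existT sem_vty A v) Hv).
  - destruct (IHM r Hm) as (cM & f & HM), (IHN r Hm) as (cN & a & HN).
    assert (HL : exists cs args, eval_args r Ns cs As args).
    { clear -IHs Hm; induction IHs as [|N0 A0 Ns0 As0 HN _ IH].
      - exists 0, tt; constructor.
      - destruct (HN r Hm) as (c & a & Ha); destruct IH as (cs & args & HL).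
        exists (c + cs), (a, args); constructor; assumption. }
    destruct HL as (cs & args & HL).
    eexists; exists (snd (f a args)); econstructor; eassumption.
  - destruct (IH1 r Hm) as (c1 & [] & H1), (IH2 r Hm) as (c2 & [] & H2).
    exists (c1 + c2), tt; constructor; assumption.
Qed.

Fixpoint sem_default_vty (A : vty) : sem_vty A :=
  match A return sem_vty A with
  | VUnit => tt
  | VArr A As res => fun _ _ => (0, sem_default_ty res)
  end
with sem_default_ty (t : ty) : sem_ty t :=
  match t return sem_ty t with TV A => sem_default_vty A | TB => tt end.

Lemma typed_decl_evaluates G D al : has_type G D al ->
  forall r, env_models G r -> exists n v, eval_decl r D n (existT sem_ty al v).
Proof.
  induction 1 as [G M al HM | G x D al _ IH | G x u y ys D' D A As al' al Hu Hl _ IHB _ IH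
                 | G x V D A As al' al _ _ IH]; intros r Hm.
  - destruct (typed_term_evaluates _ _ _ HM r Hm) as (n & v & Hv); exists n, v.
    constructor; assumption.
  - destruct (IH _ (env_models_cons G r x VUnit tt Hm)) as (n & v & Hv).
    exists n, v; apply eval_let_star; assumption.
  - assert (Hex : forall a args, exists q : nat * sem_ty al',
      eval_decl (env_extend r (y :: ys) (A :: As) (a, args)) D' (fst q) (existT sem_ty al' (snd q))).
    { intros a args; destruct (IHB (env_extend r (y :: ys) (A :: As) (a, args))) as (n & v & Hv).
      - apply env_models_extend; simpl; auto.
      - exists (n, v); assumption. }
    set (f := fun a args => proj1_sig (constructive_indefinite_description _ (Hex a args))).
    destruct (IH _ (env_models_cons _ r x (VArr A As al') f Hm)) as (n & v & Hv).
    exists n, v; apply eval_let_lam with (A := A) (As := As) (rt := al') (f := f); auto.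
    intros a args; exact (proj2_sig (constructive_indefinite_description _ (Hex a args))).
  - pose (g := sem_default_vty (VArr A As al')).
    destruct (IH _ (env_models_cons _ r x _ g Hm)) as (n & v & Hv).
    exists n, v; eapply eval_let_zero; eassumption.
Qed.

Definition default_env (G : ctx) : env :=
  map (fun q => (fst q, Some (existT sem_vty (snd q) (sem_default_vty (snd q))))) G.

Lemma default_env_models G : env_models G (default_env G).
Proof.
  induction G as [|[k A] G IH]; [discriminate|]; apply env_models_cons, IH.
Qed.

Theorem corollary2 (G : ctx) (D : decl) (al : ty) :
  has_type G D al ->
  ~ (exists f : nat -> decl, f 0 = D /\ forall n, red (f n) (f (S n))).
Proof.
  intro Ht.
  destruct (typed_decl_evaluates _ _ _ Ht _ (default_env_models G)) as (n & v & He).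
  exact (eval_decl_no_infinite_red _ _ _ _ He).
Qed.
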